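(* Let $(S^\Omega,\mathcal T)$ be a resource theory with a fair currency $\mathcal C$ (value function $\mathrm{Val}$) for a target $\mathcal S$. Let $V,W\in\mathcal S$ and let $C,C'\in\mathcal C$ be such that for every $\Delta$ in the set $\{\mathrm{Val}(C_2)-\mathrm{Val}(C): C_2\in\mathcal C,\ V\cap C\to W\cap C_2\}\cup\{\mathrm{Val}(C_2)-\mathrm{Val}(C'): C_2\in\mathcal C,\ V\cap C'\to W\cap C_2\}$ both $C$ and $C'$ satisfy $-\Delta\le\mathrm{Val}(\cdot)<c_{\sup}-\Delta$. Then $$\mathrm{Balance}(V\to W\mid C)=\mathrm{Balance}(V\to W\mid C').$$ Moreover $\mathrm{Balance}(V\to W):=\sup_{C\in\mathcal C}\mathrm{Balance}(V\to W\mid C)$ is well defined (finite or $+\infty$, i.e. the supremum is over a non-empty set of real values).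
   Context: A resource theory $(S^\Omega,\mathcal T)$ consists of a set $\Omega$, the specification space $S^\Omega$ of all non-empty subsets of $\Omega$ (resources), and a set $\mathcal T$ of maps $f:S^\Omega\to S^\Omega$ acting element-wise, $f(V)=\bigcup_{\nu\in V} f(\{\nu\})$. $V\to W$ iff some $f\in\mathcal T$ has $f(V)\subseteq W$; $\to$ is assumed to be a pre-order. $\mathcal C\subseteq S^\Omega$ is a currency for target $\mathcal S\subseteq S^\Omega$ if (Order) any two elements of $\mathcal C$ are comparable under $\to$ and $\Omega\in\mathcal C$; (Universality) $\Omega\in\mathcal S$ and every $V\in\mathcal S$ has $C,C'\in\mathcal C$ with $C\to V$, $V\to C'$. A value function $\mathrm{Val}:\mathcal C\to\mathbb R_{\ge0}$ satisfies $\mathrm{Val}(C')\ge\mathrm{Val}(C)\iff C'\to C$ and $\mathrm{Val}(\Omega)=0$; $c_{\sup}=\sup_{C\in\mathcal C}\mathrm{Val}(C)$ (possibly $\infty$). Independence: $C\cap V\ne\emptyset$ for all $C\in\mathcal C,V\in\mathcal S$, and $C\to C'$ implies $C\cap V\to C'\cap V$ for all $V\in\mathcal S$. Balance: $\mathrm{Balance}(V\to W\mid C)=\sup\{\mathrm{Val}(C')-\mathrm{Val}(C): C'\in\mathcal C,\ V\cap C\to W\cap C'\}$ (with $\sup\emptyset=-\infty$). Fairness: $\mathcal C$ is independent of $\mathcal S$, and for all $V,W\in\mathcal S$ and $C_1,C_2\in\mathcal C$ with $V\cap C_1\to W\cap C_2$, setting $\Delta=\mathrm{Val}(C_2)-\mathrm{Val}(C_1)$: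 (F1) for every $C_1'\in\mathcal C$ with $-\Delta\le\mathrm{Val}(C_1')<c_{\sup}-\Delta$ there is $C_2'\in\mathcal C$ with $V\cap C_1'\to W\cap C_2'$ and $\mathrm{Val}(C_2')-\mathrm{Val}(C_1')=\Delta$; (F2) for every $C_2'\in\mathcal C$ with $\Delta\le\mathrm{Val}(C_2')$ there is $C_1'\in\mathcal C$ with $V\cap C_1'\to W\cap C_2'$ and $\mathrm{Val}(C_2')-\mathrm{Val}(C_1')=\Delta$. *)

From Stdlib Require Import Reals Lra Classical ClassicalEpsilon.
Open Scope R_scope.
Set Implicit Arguments.

Inductive Rbar := Finite (r : R) | p_infty | m_infty.

Definition is_esup (A : R -> Prop) (s : Rbar) : Prop :=
  match s with
  | Finite r => is_lub A r
  | p_infty => (exists x, A x) /\ forall M, exists x, A x /\ M < x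
  | m_infty => forall x, ~ A x
  end.

Lemma esup_ex (A : R -> Prop) : exists s, is_esup A s.
Proof.
  destruct (classic (exists x, A x)) as [Hne | Hem].
  - destruct (classic (bound A)) as [Hb | Hnb].
    + destruct (completeness A Hb Hne) as [m Hm]. exists (Finite m). exact Hm.
    + exists p_infty. split; [exact Hne|]. intro M.
      apply NNPP; intro H. apply Hnb. exists M. intros x Hx.
      destruct (Rle_dec x M) as [|Hn]; [assumption|].
      exfalso; apply H; exists x; split; [assumption|]; lra.
  - exists m_infty. intros x Hx. apply Hem. exists x; exact Hx.
Qed.

Definition esup (A : R -> Prop) : Rbar :=
  proj1_sig (constructive_indefinite_description _ (esup_ex A)).

Definition Rbar_lt (x y : Rbar) : Prop :=
  match x, y with
  | Finite a, Finite b => a < b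
  | Finite _, p_infty => True
  | m_infty, Finite _ => True
  | m_infty, p_infty => True
  | _, _ => False
  end.

Definition Rbar_addr (s : Rbar) (r : R) : Rbar :=
  match s with Finite x => Finite (x + r) | p_infty => p_infty | m_infty => m_infty end.

(** Resources are non-empty subsets of [Om], modelled as predicates.
    A map f : S^Om -> S^Om acting element-wise is determined by its values
    on singletons, g nu := f({nu}) (a non-empty set); then
    f(V) = \bigcup_{nu in V} g nu.  The set of free maps T is a predicate
    on such g. *)
Definition nonempty {Om : Type} (V : Om -> Prop) : Prop := exists x, V x.
Definition full {Om : Type} : Om -> Prop := fun _ => True.
Definition inter {Om : Type} (V W : Om -> Prop) : Om -> Prop := fun x => V x /\ W x.

(** each map sends singletons to non-empty sets (so maps S^Om to S^Om) *)
Definition elementwise_maps {Om : Type} (T : (Om -> Om -> Prop) -> Prop) : Prop :=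
  forall g, T g -> forall nu, nonempty (g nu).

Definition conv {Om : Type} (T : (Om -> Om -> Prop) -> Prop) (V W : Om -> Prop) : Prop :=
  exists g, T g /\ forall nu, V nu -> forall x, g nu x -> W x.

Definition is_preorder {Om : Type} (T : (Om -> Om -> Prop) -> Prop) : Prop :=
  (forall V, nonempty V -> conv T V V) /\
  (forall U V W, nonempty U -> nonempty V -> nonempty W ->
     conv T U V -> conv T V W -> conv T U W).

Definition resource_theory {Om : Type} (T : (Om -> Om -> Prop) -> Prop) : Prop :=
  elementwise_maps T /\ is_preorder T.

Definition is_currency {Om : Type} (T : (Om -> Om -> Prop) -> Prop)
  (Cs Ss : (Om -> Prop) -> Prop) : Prop :=
  (forall C, Cs C -> nonempty C) /\ (forall V, Ss V -> nonempty V) /\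
  (forall C1 C2, Cs C1 -> Cs C2 -> conv T C1 C2 \/ conv T C2 C1) /\ Cs full /\
  Ss full /\
  (forall V, Ss V -> exists C C', Cs C /\ Cs C' /\ conv T C V /\ conv T V C').

Definition is_value_function {Om : Type} (T : (Om -> Om -> Prop) -> Prop)
  (Cs : (Om -> Prop) -> Prop) (Val : (Om -> Prop) -> R) : Prop :=
  (forall C, Cs C -> 0 <= Val C) /\
  (forall C C', Cs C -> Cs C' -> (Val C' >= Val C <-> conv T C' C)) /\
  Val full = 0.

Definition csup {Om : Type} (Cs : (Om -> Prop) -> Prop) (Val : (Om -> Prop) -> R) : Rbar :=
  esup (fun r => exists C, Cs C /\ Val C = r).

Definition independent {Om : Type} (T : (Om -> Om -> Prop) -> Prop)
  (Cs Ss : (Om -> Prop) -> Prop) : Prop :=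
  (forall C V, Cs C -> Ss V -> nonempty (inter C V)) /\
  (forall C C' V, Cs C -> Cs C' -> Ss V -> conv T C C' ->
     conv T (inter C V) (inter C' V)).

Definition bal_set {Om : Type} (T : (Om -> Om -> Prop) -> Prop)
  (Cs : (Om -> Prop) -> Prop) (Val : (Om -> Prop) -> R)
  (V W C : Om -> Prop) : R -> Prop :=
  fun d => exists C', Cs C' /\ conv T (inter V C) (inter W C') /\ d = Val C' - Val C.

(** Balance(V -> W | C) (sup of the empty set is -oo) *)
Definition Balance {Om : Type} (T : (Om -> Om -> Prop) -> Prop)
  (Cs : (Om -> Prop) -> Prop) (Val : (Om -> Prop) -> R)
  (V W C : Om -> Prop) : Rbar :=
  esup (bal_set T Cs Val V W C).

Definition fair {Om : Type} (T : (Om -> Om -> Prop) -> Prop)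
  (Cs Ss : (Om -> Prop) -> Prop) (Val : (Om -> Prop) -> R) : Prop :=
  independent T Cs Ss /\
  forall V W C1 C2, Ss V -> Ss W -> Cs C1 -> Cs C2 ->
    conv T (inter V C1) (inter W C2) ->
    (forall C1', Cs C1' -> - (Val C2 - Val C1) <= Val C1' ->
       Rbar_lt (Finite (Val C1')) (Rbar_addr (csup Cs Val) (- (Val C2 - Val C1))) ->
       exists C2', Cs C2' /\ conv T (inter V C1') (inter W C2') /\
                   Val C2' - Val C1' = Val C2 - Val C1) /\
    (forall C2', Cs C2' -> Val C2 - Val C1 <= Val C2' ->
       exists C1', Cs C1' /\ conv T (inter V C1') (inter W C2') /\
                   Val C2' - Val C1' = Val C2 - Val C1).

From Stdlib Require Import Reals.
From Stdlib Require Import Lra FunctionalExtensionality PropExtensionality ClassicalEpsilon.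
Open Scope R_scope.

(* Fairness (F1) transports every trade V ∩ C -> W ∩ C2 to a trade from any
   currency C' whose value lies in the admissible window, with the same value
   difference; under the hypothesis both balance sets therefore coincide.
   The balance is never -oo at a currency C0 with C0 -> W, since
   V ∩ C0 -> W ∩ Ω witnesses the difference Val Ω - Val C0. *)

Lemma esup_spec (A : R -> Prop) : is_esup A (esup A).
Proof. exact (proj2_sig (constructive_indefinite_description _ (esup_ex A))). Qed.

Lemma esup_neq_m_infty {A : R -> Prop} {d : R} : A d -> esup A <> m_infty.
Proof.
  intros Ad Hm.
  pose proof (esup_spec A) as Hs; rewrite Hm in Hs.
  exact (Hs d Ad).
Qed.

Definition value_window {Om : Type} (Cs : (Om -> Prop) -> Prop)
  (Val : (Om -> Prop) -> R) (d x : R) : Prop :=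
  - d <= x /\ Rbar_lt (Finite x) (Rbar_addr (csup Cs Val) (- d)).

Section Fairness.

Context {Om : Type} {T : (Om -> Om -> Prop) -> Prop}
  {Cs Ss : (Om -> Prop) -> Prop} {Val : (Om -> Prop) -> R}.
Hypothesis Hfair : fair T Cs Ss Val.

Lemma fair_bal_set_transfer {V W C C' : Om -> Prop} {d : R} :
  Ss V -> Ss W -> Cs C -> Cs C' ->
  bal_set T Cs Val V W C d -> value_window Cs Val d (Val C') ->
  bal_set T Cs Val V W C' d.
Proof.
  intros HV HW HC HC' [C2 [HC2 [Hconv ->]]] [Hlo Hhi].
  destruct Hfair as [_ Hf].
  destruct (proj1 (Hf V W C C2 HV HW HC HC2 Hconv) C' HC' Hlo Hhi)
    as [C2' [HC2' [Hconv' Hdiff]]].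
  exists C2'; repeat split; [exact HC2' | exact Hconv' | lra].
Qed.

Lemma fair_Balance_eq {V W C C' : Om -> Prop} :
  Ss V -> Ss W -> Cs C -> Cs C' ->
  (forall d, bal_set T Cs Val V W C d -> value_window Cs Val d (Val C')) ->
  (forall d, bal_set T Cs Val V W C' d -> value_window Cs Val d (Val C)) ->
  Balance T Cs Val V W C = Balance T Cs Val V W C'.
Proof.
  intros HV HW HC HC' HwinC' HwinC.
  unfold Balance; f_equal.
  apply functional_extensionality; intro d.
  apply propositional_extensionality; split; intro Hd.
  - exact (fair_bal_set_transfer HV HW HC HC' Hd (HwinC' d Hd)).
  - exact (fair_bal_set_transfer HV HW HC' HC Hd (HwinC d Hd)).
Qed.

End Fairness.

Lemma conv_mono {Om : Type} {T : (Om -> Om -> Prop) -> Prop}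
  {V V' W W' : Om -> Prop} :
  conv T V W -> (forall x, V' x -> V x) -> (forall x, W x -> W' x) ->
  conv T V' W'.
Proof.
  intros [g [Tg Hg]] HVV' HWW'.
  exists g; split; [exact Tg|].
  intros nu Hnu x Hx; exact (HWW' x (Hg nu (HVV' nu Hnu) x Hx)).
Qed.

Lemma bal_set_to_full {Om : Type} {T : (Om -> Om -> Prop) -> Prop}
  {Cs : (Om -> Prop) -> Prop} (Val : (Om -> Prop) -> R) (V : Om -> Prop)
  {W C : Om -> Prop} :
  Cs full -> conv T C W -> bal_set T Cs Val V W C (Val full - Val C).
Proof.
  intros Hfull HCW.
  exists full; repeat split; [exact Hfull| ].
  apply (conv_mono HCW); [now intros x [_ Hx] | now intros x Hx].
Qed.

Lemma currency_Balance_finite_somewhere {Om : Type} {T : (Om -> Om -> Prop) -> Prop}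
  {Cs Ss : (Om -> Prop) -> Prop} (Val : (Om -> Prop) -> R) (V : Om -> Prop)
  {W : Om -> Prop} :
  is_currency T Cs Ss -> Ss W ->
  exists C0, Cs C0 /\ Balance T Cs Val V W C0 <> m_infty.
Proof.
  intros [_ [_ [_ [Hfull [_ Huniv]]]]] HW.
  destruct (Huniv W HW) as [C0 [_ [HC0 [_ [HC0W _]]]]].
  exists C0; split; [exact HC0|].
  exact (esup_neq_m_infty (bal_set_to_full Val V Hfull HC0W)).
Qed.

Theorem mainTheorem8 (Om : Type) (T : (Om -> Om -> Prop) -> Prop)
  (Cs Ss : (Om -> Prop) -> Prop) (Val : (Om -> Prop) -> R)
  (HT : resource_theory T)
  (Hcur : is_currency T Cs Ss)
  (Hval : is_value_function T Cs Val)
  (Hfair : fair T Cs Ss Val)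
  (V W C C' : Om -> Prop)
  (HV : Ss V) (HW : Ss W) (HC : Cs C) (HC' : Cs C')
  (Hcond : forall d, (bal_set T Cs Val V W C d \/ bal_set T Cs Val V W C' d) ->
     (- d <= Val C /\ Rbar_lt (Finite (Val C)) (Rbar_addr (csup Cs Val) (- d))) /\
     (- d <= Val C' /\ Rbar_lt (Finite (Val C')) (Rbar_addr (csup Cs Val) (- d)))) :
  Balance T Cs Val V W C = Balance T Cs Val V W C' /\
  (exists C0, Cs C0 /\ Balance T Cs Val V W C0 <> m_infty).
Proof.
  split.
  - apply (fair_Balance_eq Hfair HV HW HC HC').
    + intros d Hd; exact (proj2 (Hcond d (or_introl Hd))).
    + intros d Hd; exact (proj1 (Hcond d (or_intror Hd))).
  - exact (currency_Balance_finite_somewhere Val V Hcur HW).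
Qed.
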